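(* Let $\sigma$ be a Frobenius endomorphism of $\mathcal{E}^r_{T,K}$ and write $P(T)=\sigma(T)=\sum_{n\in\mathbb{Z}}a_nT^n$. Let $v\in\tilde{\mathbf{A}}$ be a solution of $\mathbf{Frob}(x)=P(x)$ (where $P(x)=\sum_n a_nx^n$) with $w_0(v)=1$. Then $v\in\tilde{\mathbf{A}}^r$.
   Context: $k$ finite of characteristic $p$, $K=W(k)[1/p]$, $v_p(p)=1$, $r>0$, $F=k((T))$. $\mathcal{E}^r_{T,K}$: Laurent series $\sum a_nT^n$, $a_n\in K$, with $v_p(a_n)$ bounded below and some $c$ with $v_p(a_n)-\log_p(-n)/r\ge c$ for all $n<0$. A Frobenius endomorphism of $\mathcal{E}^r_{T,K}$: ring endomorphism restricting to the Witt Frobenius on $K$, preserving integral elements, with $\sigma(a)\equiv a^p\bmod p$. $\tilde{\mathbf{A}}=W(\widehat{F^{alg}})$ ($v_T(T)=1$), elements $\sum_{n\ge0}[x_n]p^n$ with Teichmüller lifts; $\mathbf{Frob}$ the Witt vector Frobenius; $w_k(x)=\min_{n\le k}v_T(x_n)$. $\tilde{\mathbf{A}}^r=\{x\in\tilde{\mathbf{A}}:\exists c>0,\ v_T(x_n)\ge-p^{nr}c\ \forall n\}$. *)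

From HB Require Import structures.
From mathcomp Require Import all_boot all_order all_algebra.
From mathcomp Require Import all_classical all_reals all_analysis.
Unset Implicit Arguments. Unset Strict Implicit. Unset Printing Implicit Defensive.
Import Order.TTheory GRing.Theory Num.Theory.
Local Open Scope ring_scope.

(* The field  C = \widehat{F^alg},  F = k((T)), given axiomatically up to     *)
(* isometric isomorphism: an algebraically closed field, complete for a       *)
(* valuation vT, containing k (via ik) and an element T0 (the image of T)     *)
(* with vT T0 = 1, in which the elements algebraic over k(T0) are dense.      *)
Section Fhat.
Variables (R : realType) (k : finFieldType) (C : closedFieldType)
  (ik : {rmorphism k -> C}) (vT : C -> \bar R) (T0 : C).

Definition is_valuation : Prop :=
  (forall x, vT x = +oo%E <-> x = 0) /\ (forall x, vT x != -oo%E) /\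
  (forall x y, vT (x * y) = (vT x + vT y)%E) /\
  (forall x y, (Order.min (vT x) (vT y) <= vT (x + y))%E).

Definition vT_complete : Prop := forall s : nat -> C,
  (forall M : R, exists N : nat, forall m n : nat, (N <= m)%N -> (N <= n)%N ->
     (M%:E <= vT (s m - s n))%E) ->
  exists l : C, forall M : R, exists N : nat, forall n : nat, (N <= n)%N ->
     (M%:E <= vT (s n - l))%E.

Definition alg_over_kT (a : C) : Prop := exists q : {poly {poly k}}, q != 0 /\
  (map_poly (fun f : {poly k} => (map_poly ik f).[T0]) q).[a] = 0.

Definition dense_alg : Prop := forall (c : C) (M : R),
  exists a : C, alg_over_kT a /\ (M%:E <= vT (c - a))%E.

Record Fhat_setup : Prop := {
  Fhat_val : is_valuation;
  Fhat_T0 : vT T0 = 1%:E;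
  Fhat_complete : vT_complete;
  Fhat_dense : dense_alg }.
End Fhat.

(* Atilde = W(C), given axiomatically as the strict p-ring with residue      *)
(* field C: OA (= Atilde) is a subring of the field L (= Atilde[1/p]),        *)
(* L = OA[1/p], OA is p-torsion free, p-adically separated and complete,     *)
(* red : OA -> C is a surjective ring morphism with kernel p OA, and teich   *)
(* is the (multiplicative) Teichmuller section.                              *)
Section Witt.
Variables (R : realType) (p : nat) (k : finFieldType) (C : closedFieldType)
  (ik : {rmorphism k -> C}) (vT : C -> \bar R)
  (L : fieldType) (OA : {pred L}) (red : L -> C) (teich : C -> L).

Definition inPow (m : int) (x : L) : Prop :=
  exists2 y, y \in OA & x = (p%:R : L) ^ m * y.

Record strict_p_setup : Prop := {
  OA_one : 1 \in OA;
  OA_sub : forall x y, x \in OA -> y \in OA -> x - y \in OA;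
  OA_mul : forall x y, x \in OA -> y \in OA -> x * y \in OA;
  red_add : forall x y, x \in OA -> y \in OA -> red (x + y) = red x + red y;
  red_mul : forall x y, x \in OA -> y \in OA -> red (x * y) = red x * red y;
  red_one : red 1 = 1;
  red_ker : forall x, x \in OA -> (red x = 0 <-> inPow 1 x);
  p_neq0 : (p%:R : L) != 0;
  L_frac : forall x : L, exists m : nat, (p%:R : L) ^+ m * x \in OA;
  OA_sep : forall x, (forall m : nat, inPow m x) -> x = 0;
  OA_complete : forall s : nat -> L, (forall n, s n \in OA) ->
     (forall n : nat, inPow n (s n.+1 - s n)) ->
     exists2 l, l \in OA & forall n : nat, inPow n (l - s n);
  teich_OA : forall c, teich c \in OA;
  teich_mul : forall c d, teich (c * d) = teich c * teich d;
  teich_red : forall c, red (teich c) = c }.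

Definition teich_exp (d : nat -> C) (x : L) : Prop :=
  forall N : nat, inPow N (x - \sum_(n < N) teich (d n) * (p%:R : L) ^+ n).

(* K = W(k)[1/p] inside L *)
Definition inK (x : L) : Prop := exists m : nat,
  exists2 d, teich_exp d ((p%:R : L) ^+ m * x) & forall n, exists a : k, d n = ik a.

(* Witt vector Frobenius on L = W(C)[1/p] : Frob x = y *)
Definition FrobR (x y : L) : Prop := exists m : nat,
  exists2 d, teich_exp d ((p%:R : L) ^+ m * x) &
             teich_exp (fun n => d n ^+ p) ((p%:R : L) ^+ m * y).

Definition vp_ge (x : L) (t : R) : Prop := exists2 m : int, t <= m%:~R & inPow m x.

Definition logp (x : R) : R := ln x / ln (p%:R : R).

(* Laurent series sum_n f n T^n, coefficients f : int -> L *)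
Definition inEr (r : R) (f : int -> L) : Prop :=
  (forall n, inK (f n)) /\ (exists c : R, forall n, vp_ge (f n) c) /\
  (exists c : R, forall n : int, n < 0 -> vp_ge (f n) (c + logp (- n)%:~R / r)).

Definition symsum (s : int -> L) (N : nat) : L :=
  \sum_(i < (N.*2).+1) s (i%:Z - N%:Z).

Definition psum_to (s : int -> L) (l : L) : Prop :=
  forall M : int, exists N : nat, forall N' : nat, (N <= N')%N -> inPow M (l - symsum s N').

Definition mulE (f g h : int -> L) : Prop :=
  forall n : int, psum_to (fun i => f i * g (n - i)) (h n).
Definition addE (f g : int -> L) : int -> L := fun n => f n + g n.
Definition cstE (c : L) : int -> L := fun n => if n == 0 then c else 0.
Definition TE : int -> L := fun n => if n == 1 then 1 else 0.
Fixpoint powE (f : int -> L) (j : nat) (q : int -> L) : Prop :=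
  if j is j'.+1 then exists q', powE f j' q' /\ mulE q' f q else q = cstE 1.
Definition integralE (f : int -> L) : Prop := forall n, f n \in OA.

Record frobenius_endo (r : R) (sigma : (int -> L) -> (int -> L)) : Prop := {
  fe_stable : forall f, inEr r f -> inEr r (sigma f);
  fe_add : forall f g, inEr r f -> inEr r g -> sigma (addE f g) = addE (sigma f) (sigma g);
  fe_mul : forall f g h, inEr r f -> inEr r g -> inEr r h -> mulE f g h ->
             mulE (sigma f) (sigma g) (sigma h);
  fe_one : sigma (cstE 1) = cstE 1;
  fe_K : forall c, inK c -> exists2 c', FrobR c c' & sigma (cstE c) = cstE c';
  fe_int : forall f, inEr r f -> integralE f -> integralE (sigma f);
  fe_modp : forall f q, inEr r f -> integralE f -> powE f p q ->
             forall n, inPow 1 (sigma f n - q n) }.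

(* weak topology on Atilde: x in OA with w_j(x) >= M *)
Definition weak_small (j : nat) (M : R) (x : L) : Prop :=
  x \in OA /\ forall d, teich_exp d x -> forall i, (i <= j)%N -> (M%:E <= vT (d i))%E.

Definition weak_sum_to (s : int -> L) (y : L) : Prop :=
  forall (j : nat) (M : R), exists N : nat, forall N' : nat, (N <= N')%N ->
    weak_small j M (y - symsum s N').
End Witt.

From HB Require Import structures.
From mathcomp Require Import all_boot all_order all_algebra.
From mathcomp Require Import all_classical all_reals all_analysis.
From mathcomp Require Import ring lra finfield.
Import Order.TTheory GRing.Theory Num.Theory.
Set Implicit Arguments. Unset Strict Implicit. Unset Printing Implicit Defensive.
Local Open Scope ring_scope.

(* Write v = sum_n [d_n] p^n, lambda = p^r and a_m for the coefficients of sigma(T).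
   Reducing sigma(T) = T^p modulo p gives a_m = delta_(m,p) + p b_m with b_m integral,
   and the overconvergence of sigma(T) makes a_(-M) divisible by p^(n+1) as soon as
   M > K lambda^n.  One proves v_T(d_n) >= -Phi(n) by strong induction on n, where
   Phi(n) = A (lambda^n - 1) is superadditive with room to spare.  If d_n had a
   smaller valuation delta, then the n-th digit d_n^p of Frob(v) would have valuation
   p delta, whereas every term a_m v^m of P(v) has w_n >= min(delta, -2 Phi(n)):
   the term v^p because its digits up to n only involve d_0, ..., d_n, the terms
   p b_m v^m because w_n(p y) only depends on the digits of y up to n - 1, which are
   controlled by the induction hypothesis (for v^-1 through v v^-1 = 1), and the far
   negative terms because they vanish modulo p^(n+1).
   The bound w_n(x) >= b is handled algebraically as x = [z] r mod p^(n+1) with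
   v_T(z) >= b and r in the ring generated by Teichmuller lifts of integral elements,
   whose digits are integral because the valuation ring of C is perfect. *)

Lemma leeD_EFin (R : realDomainType) (x y : \bar R) (s t u : R) :
  (s%:E <= x)%E -> (t%:E <= y)%E -> u <= s + t -> (u%:E <= x + y)%E.
Proof. by move=> Hx Hy Hu; apply: le_trans (leeD Hx Hy); rewrite -EFinD lee_fin. Qed.

Section Growth.
Variables (R : realFieldType) (lam K : R).
Hypotheses (lam_gt1 : 1 < lam) (K_ge0 : 0 <= K).

(* Large enough for K <= A, (K + 1) lam <= A (lam - 1) and 1 <= A (lam - 1)^2. *)
Definition growth_const : R := (K + 1) * lam / (lam - 1) + 1 / (lam - 1) ^+ 2.
Definition growth (n : nat) : R := growth_const * (lam ^+ n - 1).
Definition inv_growth (n : nat) : R := growth n + (0 < n)%N%:R.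

Local Notation A := growth_const.

Let lam1_gt0 : 0 < lam - 1. Proof. by rewrite subr_gt0. Qed.
Let lam_gt0 : 0 < lam. Proof. exact: lt_trans lam_gt1. Qed.
Let K1_gt0 : 0 < K + 1. Proof. by rewrite ltr_wpDl. Qed.

Lemma growth_const_gt0 : 0 < A.
Proof. by rewrite addr_gt0 ?divr_gt0 ?exprn_gt0 ?mulr_gt0. Qed.
Let A_gt0 := growth_const_gt0.

Let A_lam1 : A * (lam - 1) = (K + 1) * lam + 1 / (lam - 1).
Proof. by rewrite /A; field; rewrite gt_eqF. Qed.
Let A_lam1_sqr : A * (lam - 1) ^+ 2 = (K + 1) * lam * (lam - 1) + 1.
Proof. by rewrite /A; field; rewrite gt_eqF. Qed.

Let expr_homo : {homo GRing.exp lam : m n / (m <= n)%N >-> m <= n}.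
Proof. exact/ler_weXn2l/ltW. Qed.
Let expr_ge1 n : 1 <= lam ^+ n. Proof. by rewrite exprn_ege1 ?ltW. Qed.
Let expr_ge n : (0 < n)%N -> lam <= lam ^+ n.
Proof. by move=> n_gt0; rewrite ler_eXnr ?ltW. Qed.

Lemma growth0 : growth 0 = 0. Proof. by rewrite /growth expr0 subrr mulr0. Qed.
Lemma growth_ge0 n : 0 <= growth n.
Proof. by rewrite /growth mulr_ge0 ?subr_ge0 ?(ltW A_gt0) ?expr_ge1. Qed.
Lemma growth_homo : {homo growth : m n / (m <= n)%N >-> m <= n}.
Proof. by move=> m n le_mn; rewrite ler_wpM2l ?(ltW A_gt0) // lerD2r expr_homo. Qed.

Lemma growth_superadd_gap a b c : (0 < a)%N -> (0 < b)%N -> (a + b <= c)%N ->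
  growth a + growth b + 1 <= growth c.
Proof.
move=> a_gt0 b_gt0 le_abc.
have H1 : 1 <= A * (lam - 1) ^+ 2.
  by rewrite A_lam1_sqr lerDr !mulr_ge0 ?(ltW K1_gt0) ?(ltW lam_gt0) ?(ltW lam1_gt0).
have H2 : A * (lam - 1) ^+ 2 <= A * ((lam ^+ a - 1) * (lam ^+ b - 1)).
  rewrite ler_wpM2l ?(ltW A_gt0) // expr2.
  by apply: ler_pM; rewrite ?(ltW lam1_gt0) // lerD2r expr_ge.
have H3 : A * (lam ^+ a * lam ^+ b) <= A * lam ^+ c.
  by rewrite ler_wpM2l ?(ltW A_gt0) // -exprD expr_homo.
rewrite /growth; nra.
Qed.
Lemma growth_superadd a b c : (a + b <= c)%N -> growth a + growth b <= growth c.
Proof.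
move=> le_abc; case: (posnP a) => [a0|a_gt0].
  by rewrite a0 growth0 add0r growth_homo // -(add0n b) -a0.
case: (posnP b) => [b0|b_gt0].
  by rewrite b0 growth0 addr0 growth_homo // -(addn0 a) -b0.
by have := growth_superadd_gap a_gt0 b_gt0 le_abc; lra.
Qed.

Lemma growth_step n (M : R) : M <= K * lam ^+ n.+1 -> M + growth n + 1 <= 2 * growth n.+1.
Proof.
move=> HM; have inv_ge0 : 0 <= 1 / (lam - 1) by rewrite divr_ge0 ?(ltW lam1_gt0).
have lam_ge1 := ltW lam_gt1.
have K_lt_A : K < A.
  by rewrite -(ltr_pM2r lam1_gt0) A_lam1; move: lam_gt0 inv_ge0 K_ge0; nra.
have H1 : K * lam ^+ n.+1 + A * lam <= A * lam ^+ n.+1 + K * lam.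
  have := expr_ge (ltn0Sn n); move: K_lt_A; nra.
have H2 : A * lam ^+ n <= A * lam ^+ n.+1 by rewrite ler_wpM2l ?(ltW A_gt0) ?expr_homo.
move: A_lam1; rewrite /growth; lra.
Qed.

Lemma inv_growth0 : inv_growth 0 = 0.
Proof. by rewrite /inv_growth growth0 add0r. Qed.
Lemma inv_growthS n : inv_growth n.+1 = growth n.+1 + 1.
Proof. by []. Qed.
Lemma inv_growth_le n : inv_growth n <= growth n + 1.
Proof. by rewrite /inv_growth lerD2l lern1 leq_b1. Qed.
Lemma inv_growth_ge0 n : 0 <= inv_growth n.
Proof. by rewrite /inv_growth addr_ge0 ?growth_ge0. Qed.
Lemma inv_growth_homo : {homo inv_growth : m n / (m <= n)%N >-> m <= n}.
Proof.
move=> m n le_mn; rewrite /inv_growth lerD ?growth_homo // ler_nat.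
by case: m le_mn => // m /(leq_trans (ltn0Sn m)) ->.
Qed.
Lemma inv_growth_superadd a b c : (a + b <= c)%N -> inv_growth a + inv_growth b <= inv_growth c.
Proof.
move=> le_abc; case: (posnP a) => [a0|a_gt0].
  by rewrite a0 inv_growth0 add0r inv_growth_homo // -(add0n b) -a0.
case: (posnP b) => [b0|b_gt0].
  by rewrite b0 inv_growth0 addr0 inv_growth_homo // -(addn0 a) -b0.
have c_gt0 : (0 < c)%N by apply: leq_trans le_abc; rewrite addn_gt0 a_gt0.
rewrite /inv_growth a_gt0 b_gt0 c_gt0 /=; have := growth_superadd_gap a_gt0 b_gt0 le_abc; lra.
Qed.

Lemma inv_growth_growth_superadd a b c : (0 < b)%N -> (a + b <= c)%N ->
  inv_growth a + growth b <= growth c.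
Proof.
move=> b_gt0 le_abc; case: (posnP a) => [a0|a_gt0].
  by rewrite a0 inv_growth0 add0r growth_homo // -(add0n b) -a0.
by rewrite /inv_growth a_gt0 /=; have := growth_superadd_gap a_gt0 b_gt0 le_abc; lra.
Qed.

End Growth.

Lemma upd_superadd (R : numDomainType) (Q : nat -> R) n q : (0 < n)%N -> Q 0%N = 0 ->
  (forall a b c, (a + b <= c)%N -> Q a + Q b <= Q c) -> Q n <= q ->
  let Q' c := if c == n then q else Q c in
  forall a b c, (a + b <= c)%N -> (c <= n)%N -> Q' a + Q' b <= Q' c.
Proof.
move=> n_gt0 Q0 Q_sup le_Qn Q' a b c le_abc le_cn; rewrite /Q'.
have n0F : (0%N == n) = false by rewrite eq_sym (negbTE (lt0n_neq0 n_gt0)).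
have [a_n|a_neq] := eqVneq a n.
  have c_n : c = n by apply/eqP; rewrite eqn_leq le_cn -a_n (leq_trans (leq_addr b a) le_abc).
  have b0 : b = 0%N by move: le_abc; rewrite c_n a_n -{2}[n]addn0 leq_add2l leqn0 => /eqP.
  by rewrite b0 c_n eqxx n0F /= Q0 addr0.
have [b_n|b_neq] := eqVneq b n.
  have c_n : c = n by apply/eqP; rewrite eqn_leq le_cn -b_n (leq_trans (leq_addl a b) le_abc).
  have a0 : a = 0%N by move: le_abc; rewrite c_n b_n -{2}[n]add0n leq_add2r leqn0 => /eqP.
  by rewrite a0 c_n eqxx /= Q0 add0r.
case: eqP => [c_n|_]; last exact: Q_sup.
by apply: le_trans le_Qn; apply: Q_sup; rewrite -c_n.
Qed.

Section ValuedField.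
Variables (C : closedFieldType) (R : realType) (vT : C -> \bar R).
Hypothesis Hval : is_valuation R C vT.

Lemma vT_eq_oo x : vT x = +oo%E <-> x = 0. Proof. by case: Hval => H _; apply: H. Qed.
Lemma vT0 : vT 0 = +oo%E. Proof. exact/vT_eq_oo. Qed.
Lemma vTM x y : vT (x * y) = (vT x + vT y)%E. Proof. by case: Hval => _ [_ []]. Qed.
Lemma vTD b x y : (b <= vT x)%E -> (b <= vT y)%E -> (b <= vT (x + y))%E.
Proof. by case: Hval => _ [_ [_ Hmin]] Hx Hy; apply: le_trans (Hmin x y); rewrite le_min Hx Hy. Qed.
Lemma vT_fin x : x != 0 -> vT x = (fine (vT x))%:E.
Proof.
move=> x_neq0; case: Hval => _ [/(_ x) + _]; case Ex : (vT x) => [a| |] //= _.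
by move/vT_eq_oo: Ex => /eqP; rewrite (negbTE x_neq0).
Qed.
Lemma vT1 : vT 1 = 0%E.
Proof.
have := vTM 1 1; rewrite mulr1 (vT_fin (oner_neq0 C)) -EFinD => -[].
by rewrite -{1}[fine _]addr0 => /addrI <-.
Qed.
Lemma vTN x : vT (- x) = vT x.
Proof.
suff vTN1 : vT (-1) = 0%E by rewrite -mulN1r vTM vTN1 add0e.
have N1_neq0 : (-1 : C) != 0 by rewrite oppr_eq0 oner_neq0.
have := vTM (-1) (-1); rewrite mulrNN mulr1 vT1 (vT_fin N1_neq0) -EFinD => -[] H.
have : fine (vT (-1)) *+ 2 == 0 by rewrite mulr2n -H.
by rewrite mulrn_eq0 /= => /eqP ->.
Qed.
Lemma vTX x n : x != 0 -> vT (x ^+ n) = (n%:R * fine (vT x))%:E.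
Proof.
move=> x_neq0; elim: n => [|n IHn]; first by rewrite expr0 vT1 mul0r.
by rewrite exprS vTM IHn (vT_fin x_neq0) -EFinD mulrSr mulrDl mul1r addrC.
Qed.

Definition OC : pred C := fun c => (0 <= vT c)%E.

Lemma OC1 : 1 \in OC. Proof. by rewrite unfold_in /OC vT1. Qed.
Lemma OCB : {in OC &, forall a b, a - b \in OC}.
Proof. by move=> a b; rewrite !unfold_in /OC => Ha Hb; apply: vTD; rewrite ?vTN. Qed.
Lemma OCM : {in OC &, forall a b, a * b \in OC}.
Proof. by move=> a b; rewrite !unfold_in /OC => Ha Hb; rewrite vTM adde_ge0. Qed.
Lemma OC_root n a : (0 < n)%N -> a \in OC -> exists2 b, b \in OC & b ^+ n = a.
Proof.
move=> n_gt0 Ha; have [b Hb] := @solve_monicpoly C n (fun i => if i == 0%N then a else 0) n_gt0.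
have bnE : b ^+ n = a.
  rewrite Hb; case: n n_gt0 {Hb} => [//|q] _; rewrite big_ord_recl /= expr0 mulr1 big1 ?addr0 //.
  by move=> i _; rewrite mul0r.
exists b => //; move: Ha; rewrite !unfold_in /OC -bnE.
have [->|b_neq0] := eqVneq b 0; first by rewrite vT0.
by rewrite vTX // (vT_fin b_neq0) !lee_fin pmulr_rge0 // ltr0n.
Qed.



Lemma vT_rmorph_finField (k : finFieldType) (f : {rmorphism k -> C}) x : (0 <= vT (f x))%E.
Proof.
have [->|x_neq0] := eqVneq x 0; first by rewrite rmorph0 vT0 leey.
have fx_neq0 : f x != 0 by rewrite fmorph_eq0.
have := congr1 (vT \o f) (expf_card x); rewrite /= rmorphXn (vTX _ fx_neq0).
rewrite [in RHS](vT_fin fx_neq0) (vT_fin fx_neq0) lee_fin => -[] H.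
have : (#|k|%:R - 1) * fine (vT (f x)) = 0 by rewrite mulrBl H mul1r subrr.
move/eqP; rewrite mulf_eq0 => /orP [|/eqP -> //].
by rewrite subr_eq0 pnatr_eq1 gtn_eqF // card_finNzRing_gt1.
Qed.


Section StrictPRing.
Variables (p : nat) (L : fieldType) (OA : {pred L}) (red : L -> C) (teich : C -> L).
Hypotheses (Hp : prime p) (HS : strict_p_setup p C L OA red teich).
Local Notation P := (p%:R : L).

Lemma OA_subring_closed : subring_closed OA.
Proof. by case: HS => OA1 OAB OAM *; split. Qed.

HB.instance Definition _ := GRing.isSubringClosed.Build L OA OA_subring_closed.

Lemma teich_OA c : teich c \in OA. Proof. by case: HS. Qed.
Lemma teichM c d : teich (c * d) = teich c * teich d. Proof. by case: HS. Qed.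
Lemma teichK : cancel teich red. Proof. by case: HS. Qed.
Lemma P_neq0 : P != 0. Proof. by case: HS. Qed.

Lemma redD x y : x \in OA -> y \in OA -> red (x + y) = red x + red y.
Proof. by case: HS => *; auto. Qed.
Lemma redM x y : x \in OA -> y \in OA -> red (x * y) = red x * red y.
Proof. by case: HS => *; auto. Qed.
Lemma red1 : red 1 = 1. Proof. by case: HS. Qed.
Lemma red0 : red 0 = 0.
Proof. by apply/(addrI (red 0)); rewrite -redD ?rpred0 // !addr0. Qed.
Lemma redB x y : x \in OA -> y \in OA -> red (x - y) = red x - red y.
Proof.
move=> Hx Hy; apply/(addrI (red y)); rewrite -redD ?rpredB //.
by rewrite addrC subrK addrC subrK.
Qed.
Lemma redX x n : x \in OA -> red (x ^+ n) = red x ^+ n.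
Proof.
move=> Hx; elim: n => [|n IHn]; first by rewrite !expr0 red1.
by rewrite !exprS redM ?rpredX // IHn.
Qed.

Definition pdvd (N : nat) (x : L) := exists2 y, y \in OA & x = P ^+ N * y.

Lemma pdvd_OA N x : pdvd N x -> x \in OA.
Proof. by case=> y Hy ->; rewrite rpredM ?rpredX ?rpred_nat. Qed.
Lemma pdvd0x x : x \in OA -> pdvd 0 x.
Proof. by exists x; rewrite ?expr0 ?mul1r. Qed.
Lemma pdvdPX N x : x \in OA -> pdvd N (P ^+ N * x).
Proof. by exists x. Qed.
Lemma pdvd0 N : pdvd N 0.
Proof. by exists 0; rewrite ?mulr0 ?rpred0. Qed.
Lemma pdvdB N x y : pdvd N x -> pdvd N y -> pdvd N (x - y).
Proof. by case=> a Ha ->; case=> b Hb ->; exists (a - b); rewrite ?rpredB // mulrBr. Qed.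
Lemma pdvdN N x : pdvd N x -> pdvd N (- x).
Proof. by move=> Hx; rewrite -sub0r; apply: pdvdB Hx; apply: pdvd0. Qed.
Lemma pdvdD N x y : pdvd N x -> pdvd N y -> pdvd N (x + y).
Proof. by move=> Hx Hy; rewrite -[y]opprK; apply: pdvdB (pdvdN Hy). Qed.
Lemma pdvdMr N x y : pdvd N x -> y \in OA -> pdvd N (x * y).
Proof. by case=> a Ha -> Hy; exists (a * y); rewrite ?rpredM // mulrA. Qed.
Lemma pdvdMl N x y : pdvd N x -> y \in OA -> pdvd N (y * x).
Proof. by move=> Hx Hy; rewrite mulrC; apply: pdvdMr. Qed.
Lemma pdvdW M N x : (M <= N)%N -> pdvd N x -> pdvd M x.
Proof.
move=> leMN [a Ha ->]; exists (P ^+ (N - M) * a); first by rewrite rpredM ?rpredX ?rpred_nat.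
by rewrite mulrA -exprD subnKC.
Qed.
Lemma pdvd_mulPX M N x : pdvd N x -> pdvd (M + N) (P ^+ M * x).
Proof. by case=> a Ha ->; exists a => //; rewrite mulrA -exprD. Qed.
Lemma pdvd_divP N x : pdvd N.+1 x -> pdvd N (x / P).
Proof. by case=> a Ha ->; exists a => //; rewrite exprSr mulrAC mulfK ?P_neq0. Qed.

Lemma red_eq0 x : x \in OA -> red x = 0 <-> pdvd 1 x.
Proof. by case: HS => _ _ _ _ _ _ ker *; apply: ker. Qed.
Lemma red_eq x y : x \in OA -> y \in OA -> pdvd 1 (x - y) -> red x = red y.
Proof. by move=> Hx Hy /(red_eq0 (rpredB Hx Hy)) /eqP; rewrite redB // subr_eq0 => /eqP. Qed.
Lemma redP : red P = 0.
Proof. by apply/red_eq0; rewrite ?rpred_nat //; exists 1; rewrite ?rpred1 ?expr1 ?mulr1. Qed.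

Lemma OA_inv x : x \in OA -> red x != 0 -> x^-1 \in OA.
Proof.
move=> Hx Hredx; have x_neq0 : x != 0 by apply: contraNneq Hredx => ->; rewrite red0.
have [m] : exists m : nat, P ^+ m * x^-1 \in OA by case: HS.
elim: m => [|m IHm] Hm; first by rewrite expr0 mul1r in Hm.
apply: IHm; have : red (x * (P ^+ m.+1 * x^-1)) = 0.
  by rewrite mulrCA divff // mulr1 redX ?rpred_nat // redP expr0n.
rewrite redM // => /eqP; rewrite mulf_eq0 (negbTE Hredx) /= => /eqP.
case/red_eq0 => // z Hz; rewrite exprS -mulrA expr1 => /(mulfI P_neq0) ->.
exact: Hz.
Qed.

Lemma teich_idem c : teich c * (teich c - 1) = 0 -> teich c = 0 \/ teich c = 1.
Proof. by move/eqP; rewrite mulf_eq0 subr_eq0 => /orP [] /eqP; [left | right]. Qed.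
Lemma teich1 : teich 1 = 1.
Proof.
have /teich_idem [t0|//] : teich 1 * (teich 1 - 1) = 0.
  by rewrite mulrBr mulr1 -teichM mulr1 subrr.
by have := teichK 1; rewrite t0 red0 => /eqP; rewrite eq_sym oner_eq0.
Qed.
Lemma teich0 : teich 0 = 0.
Proof.
have /teich_idem [//|t1] : teich 0 * (teich 0 - 1) = 0.
  by rewrite mulrBr mulr1 -teichM mulr0 subrr.
by have := teichK 0; rewrite t1 red1 => /eqP; rewrite oner_eq0.
Qed.
Lemma teichX c n : teich (c ^+ n) = teich c ^+ n.
Proof. by elim: n => [|n IHn]; rewrite ?expr0 ?teich1 // !exprS teichM IHn. Qed.

Definition tpsum (e : nat -> C) (N : nat) : L := \sum_(n < N) teich (e n) * P ^+ n.
Definition digits (e : nat -> C) (x : L) := forall N, pdvd N (x - tpsum e N).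

Lemma tpsumS e N : tpsum e N.+1 = tpsum e N + teich (e N) * P ^+ N.
Proof. by rewrite /tpsum big_ord_recr. Qed.
Lemma tpsumSl e N : tpsum e N.+1 = teich (e 0%N) + P * tpsum (fun i => e i.+1) N.
Proof.
rewrite /tpsum big_ord_recl expr0 mulr1 mulr_sumr; congr (_ + _).
by apply: eq_bigr => i _; rewrite exprS mulrCA.
Qed.
Lemma tpsum_OA e N : tpsum e N \in OA.
Proof. by apply: rpred_sum => i _; rewrite rpredM ?teich_OA ?rpredX ?rpred_nat. Qed.

Lemma digits_OA e x : digits e x -> x \in OA.
Proof. by move=> /(_ 0%N); rewrite /tpsum big_ord0 subr0 => /pdvd_OA. Qed.
Lemma digits_red e x : digits e x -> red x = e 0%N.
Proof.
move=> He; have := He 1%N; rewrite /tpsum big_ord1 expr0 mulr1.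
by move/(red_eq (digits_OA He) (teich_OA _)); rewrite teichK.
Qed.
Lemma digits_shift e x :
  digits e x -> digits (fun i => e i.+1) ((x - teich (e 0%N)) / P).
Proof.
move=> He N; have := pdvd_divP (He N.+1); rewrite tpsumSl.
by congr pdvd; field; exact: P_neq0.
Qed.

Fixpoint digit_rem (x : L) (n : nat) : L :=
  if n is n'.+1 then (digit_rem x n' - teich (red (digit_rem x n'))) / P else x.

Lemma digit_rem_OA x n : x \in OA -> digit_rem x n \in OA.
Proof.
move=> Hx; elim: n => [|n IHn] //=.
have : pdvd 1 (digit_rem x n - teich (red (digit_rem x n))).
  by apply/red_eq0; rewrite ?rpredB ?teich_OA // redB ?teich_OA // teichK subrr.
by case=> y Hy ->; rewrite expr1 [P * y]mulrC mulfK ?P_neq0.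
Qed.
Lemma digits_exist x : x \in OA -> exists e, digits e x.
Proof.
move=> Hx; exists (fun n => red (digit_rem x n)) => N.
suff -> : x - tpsum (fun n => red (digit_rem x n)) N = P ^+ N * digit_rem x N.
  exact/pdvdPX/digit_rem_OA.
elim: N => [|N IHN]; first by rewrite /tpsum big_ord0 subr0 expr0 mul1r.
rewrite tpsumS opprD addrA IHN /= exprS.
by field; exact: P_neq0.
Qed.

Lemma digits_eq_pdvd k e e' x x' : digits e x -> digits e' x' -> pdvd k.+1 (x - x') ->
  forall i, (i <= k)%N -> e i = e' i.
Proof.
elim: k e e' x x' => [|k IHk] e e' x x' He He' Hxx' i le_ik.
  move: le_ik; rewrite leqn0 => /eqP ->; rewrite -(digits_red He) -(digits_red He').
  exact: red_eq (digits_OA He) (digits_OA He') Hxx'.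
have e0 : e 0%N = e' 0%N.
  rewrite -(digits_red He) -(digits_red He').
  exact: red_eq (digits_OA He) (digits_OA He') (pdvdW _ Hxx').
case: i le_ik => [|i] le_ik //.
apply: (IHk _ _ _ _ (digits_shift He) (digits_shift He')) => //.
by rewrite e0 -mulrBl opprB addrA subrK; apply: pdvd_divP.
Qed.
Lemma digits_unique e e' x : digits e x -> digits e' x -> e =1 e'.
Proof.
by move=> He He' i; apply: (digits_eq_pdvd (k := i) He He') => //; rewrite subrr; apply: pdvd0.
Qed.

Lemma digits_mulP e x : digits e x -> digits (fun i => if i is j.+1 then e j else 0) (P * x).
Proof.
move=> He [|N].
  by rewrite /tpsum big_ord0 subr0; apply/pdvd0x/rpredM; rewrite ?rpred_nat ?(digits_OA He).
by rewrite tpsumSl teich0 add0r -mulrBr; exact: (pdvd_mulPX 1 (He N)).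
Qed.
Lemma digits_mulPX m e x : digits e x ->
  digits (fun i => if (i < m)%N then 0 else e (i - m)%N) (P ^+ m * x).
Proof.
elim: m => [|m IHm] He.
  move=> N; rewrite expr0 mul1r /tpsum.
  by under eq_bigr do rewrite subn0; exact: He.
rewrite exprS -mulrA; move: (digits_mulP (IHm He)); congr digits.
by apply: boolp.funext => -[|i].
Qed.
Lemma digits_teichM z e x : digits e x -> digits (fun i => z * e i) (teich z * x).
Proof.
move=> He N; have := pdvdMl (He N) (teich_OA z).
rewrite mulrBr /tpsum mulr_sumr; congr (pdvd _ (_ - _)).
by apply: eq_bigr => i _; rewrite teichM mulrA.
Qed.
Lemma digits_teich w : digits (fun i => if i == 0%N then w else 0) (teich w).
Proof.
case=> [|N]; first by rewrite /tpsum big_ord0 subr0; apply/pdvd0x/teich_OA.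
rewrite tpsumSl /= (_ : tpsum _ N = 0) ?mulr0 ?addr0 ?subrr; first exact: pdvd0.
by rewrite /tpsum big1 // => i _; rewrite teich0 mul0r.
Qed.

Section TeichmullerSubring.
Variable S : pred C.
Hypotheses (S1 : 1 \in S) (SB : {in S &, forall a b, a - b \in S})
  (SM : {in S &, forall a b, a * b \in S})
  (S_root : forall a, a \in S -> exists2 b, b \in S & b ^+ p = a).

Inductive teich_gen : L -> Prop :=
| teich_gen_teich c : c \in S -> teich_gen (teich c)
| teich_gen1 : teich_gen 1
| teich_genB x y : teich_gen x -> teich_gen y -> teich_gen (x - y)
| teich_genM x y : teich_gen x -> teich_gen y -> teich_gen (x * y).

Lemma teich_gen_OA x : teich_gen x -> x \in OA.
Proof. by elim=> *; rewrite ?teich_OA ?rpred1 ?rpredB ?rpredM. Qed.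
Lemma teich_gen_red x : teich_gen x -> red x \in S.
Proof.
elim=> [c|||] *; rewrite ?teichK ?red1 //.
  by rewrite redB ?teich_gen_OA // SB.
by rewrite redM ?teich_gen_OA // SM.
Qed.
Lemma teich_gen0 : teich_gen 0.
Proof. by rewrite -(subrr 1); apply: teich_genB; apply: teich_gen1. Qed.
Lemma teich_genN x : teich_gen x -> teich_gen (- x).
Proof. by move=> Hx; rewrite -sub0r; apply: teich_genB Hx; apply: teich_gen0. Qed.
Lemma teich_genD x y : teich_gen x -> teich_gen y -> teich_gen (x + y).
Proof. by move=> Hx Hy; rewrite -[y]opprK; apply/teich_genB/teich_genN. Qed.
Lemma teich_gen_nat n : teich_gen n%:R.
Proof.
elim: n => [|n IHn]; first exact: teich_gen0.
by rewrite -addn1 natrD; apply: teich_genD IHn teich_gen1.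
Qed.
Lemma teich_genX x n : teich_gen x -> teich_gen (x ^+ n).
Proof.
move=> Hx; elim: n => [|n IHn]; first by rewrite expr0; apply: teich_gen1.
by rewrite exprS; apply: teich_genM.
Qed.
Lemma teich_gen_sum (I : Type) (s : seq I) (F : I -> L) :
  (forall i, teich_gen (F i)) -> teich_gen (\sum_(i <- s) F i).
Proof. by move=> HF; apply: big_ind => //; [exact: teich_gen0 | exact: teich_genD]. Qed.

Ltac teich_gen_tac := repeat first [assumption | apply: teich_gen1 | apply: teich_gen_nat
  | apply: teich_genD | apply: teich_genB | apply: teich_genN | apply: teich_genM
  | apply: teich_genX].

Lemma teich_gen_expD a b : teich_gen a -> teich_gen b ->
  exists2 c, teich_gen c & (a + b) ^+ p = a ^+ p + b ^+ p + P * c.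
Proof.
case: p Hp => [//|n] prime_n Ha Hb; rewrite exprDn.
rewrite big_ord_recr big_ord_recl /= subn0 subnn bin0 binn !mulr1n expr0 mulr1 mul1r.
exists (\sum_(i < n) a ^+ (n.+1 - bump 0 i) * b ^+ bump 0 i *+ ('C(n.+1, bump 0 i) %/ n.+1)).
  by apply: teich_gen_sum => i; rewrite -mulr_natr; teich_gen_tac.
rewrite mulr_sumr -[LHS]addrA [X in _ + X = _]addrC addrA; congr (_ + _).
apply: eq_bigr => i _; rewrite mulr_natl -mulrnA divnK //.
by apply: prime_dvd_bin => //; case: i => /= i Hi; rewrite /bump /= add1n ltnS.
Qed.
Lemma teich_gen_exprN b : teich_gen b -> exists2 c, teich_gen c & (- b) ^+ p = - b ^+ p + P * c.
Proof.
move=> Hb; have [p2|p_odd] := even_prime Hp.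
  by exists (b ^+ 2); [teich_gen_tac | rewrite p2 sqrrN mulr_natl mulr2n addKr].
exists 0; first exact: teich_gen0.
by rewrite mulr0 addr0 exprNn -signr_odd p_odd expr1 mulN1r.
Qed.

(* S is perfect and (a + b)^p = a^p + b^p mod p. *)
Lemma teich_gen_frob x : teich_gen x ->
  exists s r, [/\ teich_gen s, teich_gen r & x = s ^+ p + P * r].
Proof.
elim=> [c Sc||a b _ [s [r [Hs Hr ->]]] _ [s' [r' [Hs' Hr' ->]]]
            |a b _ [s [r [Hs Hr ->]]] _ [s' [r' [Hs' Hr' ->]]]].
- have [b Sb <-] := S_root Sc; exists (teich b), 0.
  by rewrite mulr0 addr0 teichX; split; [exact: teich_gen_teich | exact: teich_gen0 |].
- by exists 1, 0; rewrite expr1n mulr0 addr0; split; [exact: teich_gen1 | exact: teich_gen0 |].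
- have [c Hc HN] := teich_gen_exprN Hs'; have [c' Hc' HD] := teich_gen_expD Hs (teich_genN Hs').
  exists (s - s'), (r - r' - c - c'); rewrite HD HN; split; [teich_gen_tac | teich_gen_tac | ring].
- exists (s * s'), (s ^+ p * r' + r * s' ^+ p + P * r * r').
  by rewrite exprMn; split; [teich_gen_tac | teich_gen_tac | ring].
Qed.

(* Induction on k: for x = s^p + p r one has x - [x mod p] = (s - [s mod p])^p + p (c + r),
   and (s - [s mod p])^2 gains one power of p on the error term. *)
Lemma teich_gen_sub_teich k x : teich_gen x -> exists a t,
  [/\ teich_gen a, t \in OA & x - teich (red x) = P * a + P ^+ k.+1 * t].
Proof.
elim: k x => [|k IHk] x Hx.
  have : pdvd 1 (x - teich (red x)).
    have Ox := teich_gen_OA Hx.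
    by apply/red_eq0; rewrite ?rpredB ?teich_OA // redB ?teich_OA // teichK subrr.
  by case=> t Ht ->; exists 0, t; rewrite mulr0 add0r; split => //; exact: teich_gen0.
have [s [r [Hs Hr ->]]] := teich_gen_frob Hx.
have [a [t [Ha Ht Hst]]] := IHk s Hs.
set q := teich (red s).
have Hq : teich_gen q by apply/teich_gen_teich/teich_gen_red.
have [c Hc] := teich_gen_expD Hq (teich_genB Hs Hq); rewrite addrC subrK => Hsp.
have [Os Or] := (teich_gen_OA Hs, teich_gen_OA Hr).
have -> : red (s ^+ p + P * r) = red s ^+ p.
  by rewrite redD ?rpredX ?rpredM ?rpred_nat // redM ?rpred_nat // redP mul0r addr0 redX.
rewrite teichX -/q Hsp.
have p_ge2 : (2 <= p)%N := prime_gt1 Hp.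
have -> : (s - q) ^+ p = (s - q) ^+ (p - 2) * (s - q) ^+ 2 by rewrite -exprD subnK.
have -> : (s - q) ^+ 2 = P * (P * a ^+ 2) + P ^+ k.+2 * (2%:R * a * t + P ^+ k * t ^+ 2).
  by rewrite Hst !exprS; ring.
exists (c + r + (s - q) ^+ (p - 2) * (P * a ^+ 2)),
  ((s - q) ^+ (p - 2) * (2%:R * a * t + P ^+ k * t ^+ 2)); split.
- by teich_gen_tac.
- have Oa := teich_gen_OA Ha; have Oq := teich_gen_OA Hq.
  by rewrite ?(rpredM, rpredD, rpredX, rpredB, rpredN, rpred_nat, rpred1).
- by ring.
Qed.

(* Stated for the p-adic closure, which is stable under removing the first digit. *)
Lemma teich_gen_closure_digits i x e :
  (forall k, exists2 y, teich_gen y & pdvd k (x - y)) -> digits e x -> e i \in S.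
Proof.
elim: i x e => [|i IHi] x e Hx He.
  have [y Hy Hxy] := Hx 1%N; rewrite -(digits_red He).
  by rewrite (red_eq (digits_OA He) (teich_gen_OA Hy) Hxy) teich_gen_red.
apply: IHi (digits_shift He) => k.
have [y Hy Hxy] := Hx k.+1; have [a [t [Ha Ht Hyt]]] := teich_gen_sub_teich k Hy.
have Hred : red y = e 0%N.
  rewrite -(digits_red He); symmetry.
  exact: red_eq (digits_OA He) (teich_gen_OA Hy) (pdvdW _ Hxy).
exists a => //.
have -> : (x - teich (e 0%N)) / P - a = ((x - y) + P ^+ k.+1 * t) / P.
  rewrite -Hred (_ : teich (red y) = y - (P * a + P ^+ k.+1 * t)).
    by field; exact: P_neq0.
  by rewrite -Hyt opprB addrC subrK.
exact/pdvd_divP/pdvdD/pdvdPX.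
Qed.

Lemma teich_gen_digits x e : teich_gen x -> digits e x -> forall i, e i \in S.
Proof.
move=> Hx He i; apply: teich_gen_closure_digits He => k.
by exists x => //; rewrite subrr; apply: pdvd0.
Qed.

End TeichmullerSubring.

Local Notation W := (teich_gen OC).

Lemma W_digits x e : W x -> digits e x -> forall i, e i \in OC.
Proof. exact: (teich_gen_digits OC1 OCB OCM (fun a => @OC_root p a (prime_gt0 Hp))). Qed.

(* [w_ge k b x] is the paper's w_k(x) >= b (see [w_ge_digits] and [digits_w_ge]); this
   algebraic form is stable under sums and products. *)
Definition teich_mod k z x :=
  exists r t, [/\ W r, t \in OA & x = teich z * r + P ^+ k.+1 * t].
Definition w_ge k (b : \bar R) x := exists2 z, (b <= vT z)%E & teich_mod k z x.

Lemma teich_modW k z z' x : (vT z <= vT z')%E -> teich_mod k z' x -> teich_mod k z x.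
Proof.
move=> le_zz' [r [t [Hr Ht ->]]].
have [z0|z_neq0] := eqVneq z 0.
  by move: le_zz'; rewrite z0 vT0 leye_eq => /eqP /vT_eq_oo ->; exists r, t.
exists (teich (z' / z) * r), t; split => //; last by rewrite mulrA -teichM [z * _]mulrC divfK.
apply/teich_genM/Hr/teich_gen_teich; rewrite unfold_in /OC.
have vTz' : vT z' = (vT (z' / z) + vT z)%E by rewrite -vTM divfK.
move: le_zz'; rewrite vTz' (vT_fin z_neq0).
by case: (vT (z' / z)) => [s| |] //; rewrite -EFinD lee_fin lerDr.
Qed.

Lemma w_geW k b b' x : (b' <= b)%E -> w_ge k b x -> w_ge k b' x.
Proof. by move=> le_b'b [z Hz Hx]; exists z => //; apply: le_trans Hz. Qed.
Lemma w_ge_pdvd k b x : pdvd k.+1 x -> w_ge k b x.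
Proof.
case=> t Ht ->; exists 0; first by rewrite vT0 leey.
by exists 0, t; rewrite mulr0 add0r; split => //; exact: teich_gen0.
Qed.
Lemma w_ge_teich_mulPX k b z i : (b <= vT z)%E -> w_ge k b (teich z * P ^+ i).
Proof.
move=> Hz; have [le_ik|lt_ki] := leqP i k.
  exists z => //; exists (P ^+ i), 0; rewrite mulr0 addr0; split => //.
  - exact/teich_genX/teich_gen_nat.
  - exact: rpred0.
apply: w_ge_pdvd; rewrite -(subnKC lt_ki) exprD mulrCA.
by apply: pdvdPX; rewrite rpredM ?rpredX ?rpred_nat ?teich_OA.
Qed.
Lemma w_ge1 k b : (b <= 0)%E -> w_ge k b 1.
Proof.
by move=> Hb; rewrite -teich1 -[teich 1]mulr1 -(expr0 P); apply: w_ge_teich_mulPX; rewrite vT1.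
Qed.

Lemma w_geD k b x y : w_ge k b x -> w_ge k b y -> w_ge k b (x + y).
Proof.
move=> [z1 H1 Hx1] [z2 H2 Hx2].
wlog le_z12 : z1 z2 x y H1 H2 Hx1 Hx2 / (vT z1 <= vT z2)%E.
  move=> Hwlog; have [le12|/ltW le21] := leP (vT z1) (vT z2); first exact: (Hwlog z1 z2).
  by rewrite addrC; apply: (Hwlog z2 z1).
exists z1 => //; move: (teich_modW le_z12 Hx2) Hx1 => [r2 [t2 [Hr2 Ht2 ->]]] [r1 [t1 [Hr1 Ht1 ->]]].
by exists (r1 + r2), (t1 + t2); split; [exact: teich_genD | exact: rpredD | ring].
Qed.
Lemma w_ge_sum k b (I : Type) (s : seq I) (F : I -> L) :
  (forall i, w_ge k b (F i)) -> w_ge k b (\sum_(i <- s) F i).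
Proof. by move=> HF; apply: big_ind => //; [apply/w_ge_pdvd/pdvd0 | exact: w_geD]. Qed.
Lemma w_geM k b1 b2 x y : w_ge k b1 x -> w_ge k b2 y -> w_ge k (b1 + b2)%E (x * y).
Proof.
move=> [z1 H1 [r1 [t1 [Hr1 Ht1 ->]]]] [z2 H2 [r2 [t2 [Hr2 Ht2 ->]]]].
exists (z1 * z2); first by rewrite vTM leeD.
exists (r1 * r2), (t1 * (teich z2 * r2 + P ^+ k.+1 * t2) + teich z1 * r1 * t2).
rewrite teichM; split; [exact: teich_genM | | ring].
by rewrite ?(rpredD, rpredM, rpredX, rpred_nat, teich_OA, teich_gen_OA Hr1, teich_gen_OA Hr2).
Qed.
Lemma w_ge_mulW k b r x : W r -> w_ge k b x -> w_ge k b (r * x).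
Proof.
move=> Hr [z Hz [r1 [t1 [Hr1 Ht1 ->]]]]; exists z => //.
exists (r * r1), (r * t1); split; [exact: teich_genM | | ring].
by rewrite rpredM ?(teich_gen_OA Hr).
Qed.
Lemma w_ge_mulPX k m b x : w_ge k b x -> w_ge (m + k) b (P ^+ m * x).
Proof.
move=> [z Hz [r [t [Hr Ht ->]]]]; exists z => //.
exists (P ^+ m * r), t; split => //; first exact/teich_genM/Hr/teich_genX/teich_gen_nat.
by rewrite -addnS exprD; ring.
Qed.

Lemma w_ge_digits k b x e : w_ge k b x -> digits e x -> forall i, (i <= k)%N -> (b <= vT (e i))%E.
Proof.
move=> [z Hz [r [t [Hr Ht ->]]]] He i le_ik.
have [e' He'] := digits_exist (teich_gen_OA Hr).
have Hxr : pdvd k.+1 (teich z * r + P ^+ k.+1 * t - teich z * r).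
  by rewrite addrAC subrr add0r; apply: pdvdPX.
rewrite (digits_eq_pdvd He (digits_teichM z He') Hxr le_ik) vTM addeC.
exact: lee_paddl (W_digits Hr He' i) Hz.
Qed.
Lemma digits_w_ge k b x e : digits e x -> (forall i, (i <= k)%N -> (b <= vT (e i))%E) -> w_ge k b x.
Proof.
move=> He Hb; rewrite -(subrK (tpsum e k.+1) x); apply: w_geD; first exact/w_ge_pdvd/He.
by apply: w_ge_sum => i; apply/w_ge_teich_mulPX/Hb; rewrite -ltnS.
Qed.

Lemma w_ge_tpsumM k b e e' N N' :
  (forall i j, (i < N)%N -> (j < N')%N -> (i + j <= k)%N -> (b <= vT (e i) + vT (e' j))%E) ->
  w_ge k b (tpsum e N * tpsum e' N').
Proof.
move=> Hb; rewrite /tpsum mulr_suml; apply: w_ge_sum => i; rewrite mulr_sumr; apply: w_ge_sum => j.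
have -> : teich (e i) * P ^+ i * (teich (e' j) * P ^+ j) = teich (e i * e' j) * P ^+ (i + j).
  by rewrite teichM exprD; ring.
have [le_ijk|lt_kij] := leqP (i + j) k; first by apply: w_ge_teich_mulPX; rewrite vTM Hb.
apply: w_ge_pdvd; rewrite -(subnKC lt_kij) exprD mulrCA.
by apply: pdvdPX; rewrite rpredM ?rpredX ?rpred_nat ?teich_OA.
Qed.
Lemma w_ge_digitsM k b x y e e' : digits e x -> digits e' y ->
  (forall i j, (i + j <= k)%N -> (b <= vT (e i) + vT (e' j))%E) -> w_ge k b (x * y).
Proof.
move=> He He' Hb.
have -> : x * y = tpsum e k.+1 * tpsum e' k.+1
    + ((x - tpsum e k.+1) * y + tpsum e k.+1 * (y - tpsum e' k.+1)) by ring.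
apply: w_geD; first by apply: w_ge_tpsumM => i j _ _; apply: Hb.
apply/w_ge_pdvd/pdvdD; first exact/pdvdMr/(digits_OA He')/He.
exact/pdvdMl/tpsum_OA/He'.
Qed.

Definition w_nonneg x := forall k, w_ge k 0%E x.

Lemma w_nonnegB x y : w_nonneg x -> w_nonneg y -> w_nonneg (x - y).
Proof.
move=> Hx Hy k; rewrite -mulN1r; apply: w_geD => //.
exact/w_ge_mulW/Hy/teich_genN/teich_gen1.
Qed.
Lemma w_nonneg_divP x : x \in OA -> w_nonneg (P * x) -> w_nonneg x.
Proof.
move=> Hx HPx k; have [e He] := digits_exist Hx.
apply: (digits_w_ge He) => i _.
exact: w_ge_digits (HPx i.+1) (digits_mulP He) _ (leqnn i.+1).
Qed.
Lemma w_nonneg_digits_mulPX m x e : x \in OA -> digits e (P ^+ m * x) ->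
  (forall i, (0 <= vT (e i))%E) -> w_nonneg x.
Proof.
move=> Hx He He0 k; have [e' He'] := digits_exist Hx.
apply: (digits_w_ge He') => i _.
have := digits_unique (digits_mulPX m He') He (i + m).
by rewrite ltnNge leq_addl /= addnK => ->.
Qed.

Lemma w_ge_exprn (Q : nat -> R) s u z n : digits z u -> (forall c, 0 <= Q c) ->
  (forall a b c, (a + b <= c)%N -> (c <= n)%N -> Q a + Q b <= Q c) ->
  (forall c, (c <= n)%N -> ((- (s + Q c))%:E <= vT (z c))%E) ->
  forall m c, (c <= n)%N -> w_ge c (- (m%:R * s + Q c))%:E (u ^+ m).
Proof.
move=> Hz Q_ge0 Q_sup Hzb; elim=> [|m IHm] c le_cn.
  by rewrite expr0 mul0r add0r; apply: w_ge1; rewrite lee_fin oppr_le0.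
have [e He] := digits_exist (rpredX m (digits_OA Hz)).
rewrite exprSr; apply: (w_ge_digitsM He Hz) => i j le_ijc.
have le_in : (i <= n)%N by apply: leq_trans le_cn; apply: leq_trans le_ijc; apply: leq_addr.
have le_jn : (j <= n)%N by apply: leq_trans le_cn; apply: leq_trans le_ijc; apply: leq_addl.
apply: leeD_EFin (w_ge_digits (IHm i le_in) He (leqnn i)) (Hzb j le_jn) _.
by have := Q_sup _ _ _ le_ijc le_cn; rewrite mulrSr; lra.
Qed.

Section DigitBound.
Variables (v : L) (d : nat -> C) (a : int -> L) (y : L) (lam K : R).
Hypotheses (Hv : digits d v) (Hd0 : vT (d 0%N) = 1%:E) (lam_gt1 : 1 < lam) (K_ge0 : 0 <= K).
Hypothesis Ha : forall m, exists2 b, w_nonneg b & a m = (if m == p%:Z then 1 else 0) + P * b.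
Hypothesis Ha_neg : forall M n : nat, K * lam ^+ n < M%:R -> pdvd n.+1 (a (- M%:Z)).
Hypothesis Hy : forall (n : nat) (b : R), exists N : nat,
  w_ge n b%:E (y - \sum_(i < N.*2.+1) a (i%:Z - N%:Z) * v ^ (i%:Z - N%:Z)).
Hypothesis Hyd : digits (fun i => d i ^+ p) y.

Local Notation Phi := (growth lam K).
Local Notation Psi := (inv_growth lam K).
Let Phi_ge0 := growth_ge0 lam_gt1 K_ge0.
Let Phi_homo := growth_homo lam_gt1 K_ge0.

Let v_OA : v \in OA. Proof. exact: digits_OA Hv. Qed.
Let redv_neq0 : red v != 0.
Proof. by rewrite (digits_red Hv); apply: contra_eq_neq Hd0 => ->; rewrite vT0. Qed.
Let v_neq0 : v != 0. Proof. by apply: contraNneq redv_neq0 => ->; rewrite red0. Qed.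
Let vinv_OA : v^-1 \in OA. Proof. exact: OA_inv. Qed.

(* The digits of v^-1 are read off from v * v^-1 = 1 modulo increasing powers of p. *)
Lemma inv_digits_bound n z : digits z v^-1 ->
  (forall c, (0 < c)%N -> (c <= n)%N -> ((- Phi c)%:E <= vT (d c))%E) ->
  forall c, (c <= n)%N -> ((-1 - Psi c)%:E <= vT (z c))%E.
Proof.
move=> Hz Hdn; elim/ltn_ind => -[_ _ | c IHc le_cn].
  have : vT (d 0%N * z 0%N) = 0%E.
    by rewrite -(digits_red Hz) -(digits_red Hv) -redM // mulfV // red1 vT1.
  rewrite vTM Hd0 inv_growth0 subr0; case: (vT (z 0%N)) => [s| |] //.
  by move=> /eqP; rewrite -EFinD eqe => /eqP Hs; rewrite lee_fin; lra.
set Z := tpsum z c.+1; set V := tpsum d c.+2; set V' := tpsum (fun i => d i.+1) c.+1.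
have Hpdvd : pdvd c.+2 (P ^+ c.+1 * teich (z c.+1 * d 0%N) - (1 - Z * V)).
  have -> : P ^+ c.+1 * teich (z c.+1 * d 0%N) - (1 - Z * V) =
     - (teich (z c.+1) * (P ^+ c.+2 * V')) - (Z + teich (z c.+1) * P ^+ c.+1) * (v - V)
     - (v^-1 - tpsum z c.+2) * v.
    by rewrite tpsumS -/Z /V tpsumSl -/V' teichM !exprS; field.
  apply: pdvdB; last exact: pdvdMr (Hz _) v_OA.
  apply: pdvdB.
    exact/pdvdN/pdvdMl/teich_OA/pdvdPX/tpsum_OA.
  by apply: pdvdMl (Hv _) _; rewrite rpredD ?rpredM ?rpredX ?rpred_nat ?tpsum_OA ?teich_OA.
have Hw : w_ge c.+1 (- Psi c.+1)%:E (P ^+ c.+1 * teich (z c.+1 * d 0%N)).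
  rewrite -(subrK (1 - Z * V) (_ * _)); apply: w_geD; first exact: w_ge_pdvd Hpdvd.
  apply: w_geD; first by apply: w_ge1; rewrite lee_fin oppr_le0 inv_growth_ge0.
  rewrite -[- (Z * V)]mulN1r; apply: w_ge_mulW; first exact/teich_genN/teich_gen1.
  apply: w_ge_tpsumM => i j lt_ic lt_jc le_ijc.
  have Hzi := IHc i lt_ic (leq_trans (ltnW lt_ic) le_cn).
  have [j0|j_gt0] := posnP j.
    rewrite j0 Hd0; apply: (leeD_EFin Hzi (lexx 1%:E)).
    by have := inv_growth_homo lam_gt1 K_ge0 (ltnW lt_ic); lra.
  apply: leeD_EFin Hzi (Hdn j j_gt0 (leq_trans (lt_jc : (j <= c.+1)%N) le_cn)) _.
  by have := inv_growth_growth_superadd lam_gt1 K_ge0 j_gt0 le_ijc; rewrite inv_growthS; lra.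
have := w_ge_digits Hw (digits_mulPX c.+1 (digits_teich (z c.+1 * d 0%N))) (leqnn c.+1).
rewrite ltnn subnn eqxx vTM Hd0; case: (vT (z c.+1)) => [s| |] //=.
  by rewrite !lee_fin; lra.
by move=> _; exact: leey.
Qed.

Lemma w_ge_term n be m : be <= - (2 * Phi n.+1) ->
  w_ge n.+1 be%:E (v ^+ p) ->
  (forall j : nat, w_ge n (- Phi n)%:E (v ^+ j)) ->
  (forall M : nat, w_ge n (- (M%:R + Psi n))%:E (v^-1 ^+ M)) ->
  w_ge n.+1 be%:E (a m * v ^ m).
Proof.
move=> Hbe Hvp HvX HvN.
have HP x b : w_ge n b x -> w_ge n.+1 b (P * x) by move/(w_ge_mulPX 1); rewrite expr1.
have Phin_ge0 := Phi_ge0 n.+1; have Phi_le := Phi_homo (leqnSn n).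
case: m => j.
  have [b Hb ->] := Ha j; rewrite mulrDl; apply: w_geD.
    by case: eqP => [->|_]; rewrite ?mul1r ?mul0r //; apply/w_ge_pdvd/pdvd0.
  rewrite -mulrA; apply/HP/(w_geW _ (w_geM (Hb n) (HvX j))).
  by rewrite add0e lee_fin; lra.
rewrite NegzE -exprnN -exprVn.
have [HM|HM] := ltrP (K * lam ^+ n.+1) j.+1%:R.
  by apply/w_ge_pdvd/pdvdMr; [exact: Ha_neg | exact: rpredX].
have [b Hb ->] := Ha (- j.+1%:Z); rewrite add0r -mulrA.
apply/HP/(w_geW _ (w_geM (Hb n) (HvN j.+1))).
have := growth_step lam_gt1 K_ge0 HM; have := inv_growth_le lam K n.
by rewrite add0e lee_fin; lra.
Qed.

Lemma digit_bound_step n : (forall c, (c < n)%N -> ((- Phi c)%:E <= vT (d c))%E) ->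
  ((- Phi n)%:E <= vT (d n))%E.
Proof.
case: n => [_|n IHn]; first by rewrite Hd0 growth0 oppr0 lee_fin.
rewrite leNgt; apply/negP => Hlt.
have dn_neq0 : d n.+1 != 0 by apply: contraTneq Hlt => ->; rewrite vT0 ltNge leey.
set del := fine (vT (d n.+1)); have vTdn : vT (d n.+1) = del%:E := vT_fin dn_neq0.
rewrite vTdn lte_fin in Hlt; have Phin_ge0 := Phi_ge0 n.+1.
pose Q c := if c == n.+1 then - del else Phi c.
have HvX : forall m c, (c <= n.+1)%N -> w_ge c (- (m%:R * 0 + Q c))%:E (v ^+ m).
  apply: (w_ge_exprn Hv) => [c | | c le_cn].
  - by rewrite /Q; case: eqP => _ //; lra.
  - by apply: upd_superadd (growth_superadd lam_gt1 K_ge0) _; rewrite ?growth0 //; lra.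
  - rewrite /Q add0r; case: eqP => [->|/eqP c_neq]; first by rewrite opprK vTdn.
    by apply: IHn; rewrite ltn_neqAle c_neq.
have [z Hz] := digits_exist vinv_OA.
have Hzb := inv_digits_bound Hz (fun c _ le_cn => IHn c le_cn).
have HvN : forall M c, (c <= n)%N -> w_ge c (- (M%:R * 1 + Psi c))%:E (v^-1 ^+ M).
  apply: (w_ge_exprn Hz) => [c | i j c le_ijc _ | c /Hzb Hzc]; last by rewrite opprD.
    exact: inv_growth_ge0.
  exact: inv_growth_superadd.
set be := Num.min (- (2 * Phi n.+1)) del.
have Hterm m : w_ge n.+1 be%:E (a m * v ^ m).
  apply: w_ge_term; first by rewrite ge_min lexx.
  - apply: w_geW (HvX p n.+1 (leqnn _)).
    by rewrite /Q eqxx mulr0 add0r opprK lee_fin ge_min lexx orbT.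
  - by move=> j; have := HvX j n (leqnSn n); rewrite /Q (ltn_eqF (ltnSn n)) mulr0 add0r.
  - by move=> M; have := HvN M n (leqnn n); rewrite mulr1.
have Hyw : w_ge n.+1 be%:E y.
  have [N HN] := Hy n.+1 be.
  set S := \sum_(i < N.*2.+1) _ in HN.
  by rewrite -(subrK S y); apply: w_geD HN (w_ge_sum _ _).
have := w_ge_digits Hyw Hyd (leqnn n.+1); rewrite vTX // vTdn /= lee_fin ge_min.
have p_ge2 : 2 <= p%:R :> R by rewrite ler_nat prime_gt1.
have : p%:R * del <= 2 * del by rewrite ler_wnM2r //; lra.
by move=> Hp2 /orP []; lra.
Qed.

Lemma digits_growth_bound n : ((- (growth_const lam K * lam ^+ n))%:E <= vT (d n))%E.
Proof.
have : ((- Phi n)%:E <= vT (d n))%E by elim/ltn_ind: n => n; apply: digit_bound_step.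
by apply: le_trans; rewrite lee_fin lerN2 ler_pM2l ?growth_const_gt0 //; lra.
Qed.

End DigitBound.

Lemma teich_expE e x : teich_exp p C L OA teich e x <-> digits e x.
Proof. by []. Qed.

Lemma FrobR_digits v y d : digits d v -> FrobR p C L OA teich v y ->
  digits (fun i => d i ^+ p) y.
Proof.
move=> Hv [m [d' Hd' Hdy]].
have Hd'v := digits_unique (digits_mulPX m Hv) Hd'.
have y_OA : y \in OA.
  have [y' Hy' Ey] : pdvd m (P ^+ m * y).
    rewrite -[_ * y]subr0 -(_ : tpsum (fun n => d' n ^+ p) m = 0); first exact: Hdy.
    rewrite /tpsum big1 // => i _.
    by rewrite -Hd'v ltn_ord expr0n (gtn_eqF (prime_gt0 Hp)) teich0 mul0r.
  by move/(mulfI (expf_neq0 m P_neq0)): Ey => ->.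
have [e He] := digits_exist y_OA.
have Hey := digits_unique (digits_mulPX m He) Hdy.
suff -> : (fun i => d i ^+ p) = e by [].
apply: boolp.funext => i; have := Hey (i + m); have := Hd'v (i + m).
by rewrite /= ltnNge leq_addl /= addnK => <- ->.
Qed.

Lemma weak_sum_w_ge (s : int -> L) y0 : weak_sum_to R p C vT L OA teich s y0 ->
  forall (n : nat) (b : R), exists N : nat, w_ge n b%:E (y0 - symsum L s N).
Proof.
move=> Hs n b; have [N HN] := Hs n b; exists N.
have [yN_OA HyN] := HN N (leqnn N); have [e He] := digits_exist yN_OA.
exact: digits_w_ge He (HyN e He).
Qed.

Lemma powE_TE j : powE p L OA (TE L) j (fun n => if n == j%:Z then 1 else 0).
Proof.
elim: j => [|j IHj] /=; first by apply: boolp.funext => n; rewrite /cstE.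
exists (fun n => if n == j%:Z then 1 else 0); split => // n M; exists j => N le_jN.
have -> : symsum L (fun i => (if i == j%:Z then 1 else 0) * TE L (n - i)) N =
    if n == j.+1%:Z then 1 else 0.
  have lt_Nj : (N + j < N.*2.+1)%N by rewrite -addnn ltnS leq_add2l.
  rewrite /symsum (bigD1 (Ordinal lt_Nj)) //= big1 ?addr0.
    rewrite PoszD addrAC subrr add0r eqxx mul1r /TE subr_eq -addn1 PoszD addrC.
    by case: eqP.
  move=> i /eqP i_neq; case: eqP => [Hi|_]; last by rewrite mul0r.
  exfalso; apply: i_neq; apply: val_inj => /=.
  by move/(congr1 (fun x => x + N%:Z)): Hi; rewrite subrK -PoszD addnC => -[].
by rewrite subrr; exists 0; rewrite ?mulr0 ?rpred0.
Qed.

Section FrobeniusEndomorphism.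
Variables (k : finFieldType) (ik : {rmorphism k -> C}) (r : R) (sigma : (int -> L) -> (int -> L)).
Hypotheses (r_gt0 : 0 < r) (Hsigma : frobenius_endo R p k C ik L OA teich r sigma).

Local Notation inK := (inK p k C ik L OA teich).
Local Notation vp_ge := (vp_ge R p L OA).

Lemma inK_teich (c : k) : inK (teich (ik c)).
Proof.
exists 0%N; exists (fun i => if i == 0%N then ik c else 0).
  by rewrite mul1r; exact: digits_teich.
by move=> i; case: eqP => _; [exists c | exists 0; rewrite rmorph0].
Qed.

Lemma inK_w_nonneg x : x \in OA -> inK x -> w_nonneg x.
Proof.
move=> x_OA [m [e He He_k]]; apply: w_nonneg_digits_mulPX x_OA He _ => i.
by have [c ->] := He_k i; exact: vT_rmorph_finField.
Qed.

Lemma vp_ge_pdvd x t (n : nat) : n%:R < t -> vp_ge x t -> pdvd n.+1 x.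
Proof.
move=> lt_nt [[e|e] le_te [x' Hx' ->]]; last first.
  have := lt_le_trans lt_nt le_te; rewrite NegzE mulrNz.
  have : 0 <= (e.+1%:Z)%:~R :> R by rewrite ler0z.
  by have := ler0n R n; lra.
have lt_ne : (n < e)%N by rewrite -(ltr_nat R); apply: lt_le_trans le_te.
exists (P ^+ (e - n.+1) * x'); first by rewrite rpredM ?rpredX ?rpred_nat.
by rewrite mulrA -exprD subnKC.
Qed.

Lemma TE_inEr : inEr R p k C ik L OA teich r (TE L).
Proof.
have inK1 : inK 1 by rewrite -teich1 -(rmorph1 ik); exact: inK_teich.
have inK0 : inK 0 by rewrite -teich0 -(rmorph0 ik); exact: inK_teich.
have vp_ge0 t : vp_ge 0 t.
  by exists (Num.ceil t); [exact: ceil_ge | exists 0; rewrite ?mulr0 ?rpred0].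
split; first by move=> n; rewrite /TE; case: eqP.
split.
  exists 0 => n; rewrite /TE; case: eqP => _ //.
  by exists 0 => //; exists 1; rewrite ?rpred1 ?mulr1.
by exists 0 => n n_lt0; rewrite /TE; case: eqP => // n1; rewrite n1 in n_lt0.
Qed.

Local Notation a := (sigma (TE L)).

Lemma sigmaT_modp m : exists2 b, w_nonneg b & a m = (if m == p%:Z then 1 else 0) + P * b.
Proof.
case: Hsigma => /(_ _ TE_inEr) [a_K _] _ _ _ _ /(_ _ TE_inEr) a_OA /(_ _ _ TE_inEr) a_modp.
have TE_OA n : TE L n \in OA by rewrite /TE; case: eqP; rewrite ?rpred1 ?rpred0.
have am_OA := a_OA TE_OA m.
have [b b_OA Eb] := a_modp _ TE_OA (powE_TE p) m; rewrite expr1z in Eb.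
exists b; last by rewrite -Eb addrC subrK.
apply: w_nonneg_divP b_OA _; rewrite -Eb; apply: w_nonnegB; first exact: inK_w_nonneg am_OA (a_K m).
by case: eqP => _ j; [apply: w_ge1 | apply/w_ge_pdvd/pdvd0].
Qed.

Lemma sigmaT_neg_pdvd : exists2 K : R, 0 <= K & forall M n : nat,
  K * (p%:R `^ r) ^+ n < M%:R -> pdvd n.+1 (a (- M%:Z)).
Proof.
case: Hsigma => /(_ _ TE_inEr) [_ [_ [c Hc]]] _ _ _ _ _ _.
have p_gt1 : 1 < p%:R :> R by rewrite ltr1n prime_gt1.
have lnp_gt0 : 0 < ln (p%:R : R) := ln_gt0 p_gt1.
exists (p%:R `^ (- (r * c))); first exact: powR_ge0.
move=> M n HM; have Kl_gt0 : 0 < p%:R `^ (- (r * c)) * (p%:R `^ r) ^+ n.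
  by rewrite mulr_gt0 ?exprn_gt0 ?powR_gt0 ?(lt_trans ltr01).
have M_gt0 : (0 < M)%N by rewrite -(ltr0n R) (lt_trans Kl_gt0).
apply: (vp_ge_pdvd _ (Hc _ _)); last by rewrite oppr_lt0 ltz_nat.
rewrite opprK /logp; have : ln (p%:R `^ (- (r * c)) * (p%:R `^ r) ^+ n) < ln (M%:R : R).
  by rewrite ltr_ln ?posrE ?ltr0n.
rewrite lnM ?posrE ?exprn_gt0 ?powR_gt0 ?(lt_trans ltr01) // lnXn ?powR_gt0 ?(lt_trans ltr01) //.
rewrite !ln_powR => Hln; rewrite -ltrBlDl ltr_pdivlMr // ltr_pdivlMr //.
by move: Hln; rewrite -mulr_natr; nra.
Qed.

End FrobeniusEndomorphism.

End StrictPRing.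
End ValuedField.

Theorem lemma4p4 (R : realType) (p : nat) (k : finFieldType) (C : closedFieldType)
    (ik : {rmorphism k -> C}) (vT : C -> \bar R) (T0 : C)
    (L : fieldType) (OA : {pred L}) (red : L -> C) (teich : C -> L)
    (r : R) (sigma : (int -> L) -> (int -> L)) (v : L) (d : nat -> C) :
  prime p -> p \in [pchar k] ->
  Fhat_setup R k C ik vT T0 ->
  strict_p_setup p C L OA red teich ->
  0 < r ->
  frobenius_endo R p k C ik L OA teich r sigma ->
  v \in OA -> teich_exp p C L OA teich d v ->
  vT (d 0%N) = 1%:E ->
  (exists2 y, FrobR p C L OA teich v y &
     weak_sum_to R p C vT L OA teich (fun n : int => sigma (TE L) n * v ^ n) y) ->
  exists2 c : R, 0 < c &
    forall n : nat, ((- ((p%:R : R) `^ (n%:R * r) * c))%:E <= vT (d n))%E.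
Proof.
move=> Hp _ [Hval _ _ _] HS r_gt0 Hsigma _ /teich_expE Hv Hd0 [y Hfrob Hws].
have lam_gt1 : 1 < (p%:R : R) `^ r.
  have one_r : (1 : R) `^ r = 1 by rewrite powR1.
  by rewrite -{1}one_r; apply: gt0_ltr_powR; rewrite ?nnegrE ?ler01 ?ler0n ?ltr1n ?prime_gt1.
have [K K_ge0 Ha_neg] := sigmaT_neg_pdvd Hp HS r_gt0 Hsigma.
exists (growth_const ((p%:R : R) `^ r) K); first exact: growth_const_gt0 lam_gt1 K_ge0.
move=> n; rewrite [_%:R * r]mulrC powRrM powR_mulrn ?powR_ge0 // mulrC.
exact: (digits_growth_bound Hval Hp HS Hv Hd0 lam_gt1 K_ge0 (sigmaT_modp Hval Hp HS Hsigma)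
  Ha_neg (weak_sum_w_ge Hval HS Hws) (FrobR_digits Hp HS Hv Hfrob)).
Qed.
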